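(* Let $D_5$ be the undirected tree with vertices $v,a,b,c,d$ and edges $va, vb, vc, cd$. Let $\Gamma$ be a vertex-transitive connected undirected graph with more than five vertices that contains a subgraph isomorphic to $D_5$, and suppose $\Upsilon_v(D_5,\Gamma)$ is finite. Then $\Upsilon_v^{\mathrm{sym}}(D_5,\Gamma)<5\,\Upsilon_v(D_5,\Gamma)$. In particular, $D_5$ is not vertex-costly in the class of vertex-transitive connected graphs.
   Context: Undirected graphs (loops and multiple edges may be present in $\Gamma$). ''Subgraph'' means an arbitrary (not necessarily induced) subgraph. A graph is vertex-transitive if its automorphism group acts transitively on its vertices. $\Upsilon_v(K,\Gamma)$ is the minimal integer $n$ such that $\Gamma$ has a set $X$ of $n$ vertices with every subgraph of $\Gamma$ isomorphic to $K$ containing a vertex of $X$; $\Upsilon_v^{\mathrm{sym}}(K,\Gamma)$ is the minimal such $n$ when $X$ is additionally required to be $\mathrm{Aut}\,\Gamma$-invariant. A finite graph $K$ with $k$ vertices is vertex-costly in a class $\mathcal{K}$ if for every integer $m$ there exists $\Gamma_m\in\mathcal{K}$ with $\Upsilon_v^{\mathrm{sym}}(K,\Gamma_m)=k\cdot\Upsilon_v(K,\Gamma_m)\ge m$. *)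

(* Graphs may be infinite and may have loops and multiple edges. *)
From Stdlib Require Import List Arith Relations.
Import ListNotations.

(* An undirected multigraph: a vertex type, an edge type, and for each edge
   its (unordered) pair of endpoints, represented by an ordered pair read up
   to swapping. *)
Record graph := Graph { V : Type; E : Type; ends : E -> V * V }.

Definition joins (G : graph) (e : E G) (x y : V G) : Prop :=
  ends G e = (x, y) \/ ends G e = (y, x).

Definition adj (G : graph) (x y : V G) : Prop := exists e : E G, joins G e x y.

Definition bijective {A B : Type} (f : A -> B) : Prop :=
  exists g : B -> A, (forall a, g (f a) = a) /\ (forall b, f (g b) = b).

(* Vertex part of an automorphism of the multigraph: a bijection on vertices
   together with a bijection on edges preserving incidence. *)
Definition is_aut (G : graph) (f : V G -> V G) : Prop :=
  bijective f /\
  exists g : E G -> E G, bijective g /\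
    forall e x y, joins G e x y -> joins G (g e) (f x) (f y).

Definition vertex_transitive (G : graph) : Prop :=
  forall x y : V G, exists f, is_aut G f /\ f x = y.

Definition connected (G : graph) : Prop :=
  forall x y : V G, clos_refl_trans (V G) (adj G) x y.

Definition more_than_five_vertices (G : graph) : Prop :=
  exists l : list (V G), NoDup l /\ length l = 6.

(* A subgraph of G isomorphic
   to D_5 is given (as far as its vertex set is concerned) by five pairwise
   distinct vertices with the four required adjacencies. *)
Definition D5_copy (G : graph) (v a b c d : V G) : Prop :=
  NoDup [v; a; b; c; d] /\ adj G v a /\ adj G v b /\ adj G v c /\ adj G c d.

Definition contains_D5 (G : graph) : Prop :=
  exists v a b c d, D5_copy G v a b c d.

Definition hits_D5 (G : graph) (X : list (V G)) : Prop :=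
  forall v a b c d, D5_copy G v a b c d ->
    exists w, In w [v; a; b; c; d] /\ In w X.

Definition aut_invariant (G : graph) (X : list (V G)) : Prop :=
  forall f, is_aut G f -> forall x, In x X -> In (f x) X.

Definition D5_transversal (G : graph) (n : nat) : Prop :=
  exists X : list (V G), NoDup X /\ length X = n /\ hits_D5 G X.

Definition D5_sym_transversal (G : graph) (n : nat) : Prop :=
  exists X : list (V G), NoDup X /\ length X = n /\ hits_D5 G X
    /\ aut_invariant G X.

(* Upsilon_v(D5, G) = n  (in particular it is finite) *)
Definition Upsilon_v_D5 (G : graph) (n : nat) : Prop :=
  D5_transversal G n /\ forall m, D5_transversal G m -> n <= m.

(* Upsilon_v^sym(D5, G) = n  (in particular it is finite) *)
Definition Upsilon_v_sym_D5 (G : graph) (n : nat) : Prop :=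
  D5_sym_transversal G n /\ forall m, D5_sym_transversal G m -> n <= m.

Definition vt_connected (G : graph) : Prop :=
  vertex_transitive G /\ connected G.

Definition D5_vertex_costly (K : graph -> Prop) : Prop :=
  forall m : nat, exists G : graph, K G /\
    exists n s, Upsilon_v_D5 G n /\ Upsilon_v_sym_D5 G s /\ s = 5 * n /\ m <= s.

(* Transitivity and one copy of D_5 give every vertex three distinct neighbours.
   With connectivity and a sixth vertex, a case analysis shows that some copy
   (v,a,b,c,d) extends by a new vertex z adjacent to v or to c: otherwise the five
   vertices of a suitable copy would have all their neighbours among themselves.
   Moving this configuration by an automorphism so that a (resp. d) lies in a
   transversal X and swapping z for that leaf yields a copy meeting X twice.
   A finite transversal makes the graph finite, and the only invariant transversal
   is the whole vertex set V.  Count the pairs (copy, position) whose vertex lies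
   in X: by transitivity every vertex occupies each position equally often, so this
   number is 5 |X| |copies| / |V|, while it exceeds |copies| because every copy meets
   X and one meets it twice.  Hence |V| < 5 |X|. *)

From Stdlib Require Import List Relations Lia Classical ClassicalEpsilon.
Import ListNotations.

Lemma adj_sym G x y : adj G x y -> adj G y x.
Proof. intros [e H]. exists e. unfold joins in *. tauto. Qed.

Lemma aut_adj G f x y : is_aut G f -> adj G x y -> adj G (f x) (f y).
Proof. intros [_ [g [_ Hg]]] [e He]. exists (g e). auto. Qed.

Lemma aut_inj G f x y : is_aut G f -> f x = f y -> x = y.
Proof. intros [[h [Hh _]] _] E. rewrite <- (Hh x), <- (Hh y), E. reflexivity. Qed.

Lemma aut_In G f x l : is_aut G f -> In (f x) (map f l) -> In x l.
Proof.
  intros Hf Hx. apply in_map_iff in Hx as [y [E Hy]].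
  apply (aut_inj G f) in E; [subst; exact Hy | exact Hf].
Qed.

Lemma aut_NoDup G f l : is_aut G f -> NoDup l -> NoDup (map f l).
Proof.
  intros Hf. induction 1 as [|x l Hx _ IH]; constructor; [|exact IH].
  intro H. exact (Hx (aut_In G f x l Hf H)).
Qed.

Lemma aut_copy G f v a b c d : is_aut G f -> D5_copy G v a b c d ->
  D5_copy G (f v) (f a) (f b) (f c) (f d).
Proof.
  intros Hf [N [Ha [Hb [Hc Hd]]]].
  split; [exact (aut_NoDup G f _ Hf N)|].
  repeat split; apply aut_adj; assumption.
Qed.

Lemma exists_not_In {A} (l e : list A) : NoDup l -> length e < length l ->
  exists x, In x l /\ ~ In x e.
Proof.
  intros N Hlen. apply NNPP. intro H.
  assert (Hincl : incl l e) by (intros x Hx; apply NNPP; eauto).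
  pose proof (NoDup_incl_length N Hincl). lia.
Qed.

Lemma connected_closed_all G (P : V G -> Prop) x : connected G -> P x ->
  (forall y z, P y -> adj G y z -> P z) -> forall z, P z.
Proof.
  intros conn Hx Hcl z. specialize (conn x z). apply clos_rt_rt1n in conn.
  induction conn; eauto.
Qed.

Ltac nodup_facts :=
  repeat match goal with
  | H : NoDup (_ :: _) |- _ => apply NoDup_cons_iff in H as [? H]
  | H : NoDup [] |- _ => clear H
  | H : D5_copy _ _ _ _ _ _ |- _ => destruct H as [? [? [? [? ?]]]]
  end; simpl in *.

Ltac prove_NoDup := repeat constructor; simpl; intuition (subst; auto).

Ltac prove_copy :=
  split; [prove_NoDup | repeat split; first [assumption | apply adj_sym; assumption]].

Definition D5_extendable (G : graph) : Prop := exists v a b c d z,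
  D5_copy G v a b c d /\ ~ In z [v; a; b; c; d] /\ (adj G v z \/ adj G c z).

Definition degree_ge3 (G : graph) : Prop :=
  forall (w : V G) (l : list (V G)), length l <= 2 -> exists z, adj G w z /\ ~ In z (w :: l).

Definition nbrs_in (G : graph) (x : V G) (S : list (V G)) : Prop :=
  forall z, adj G x z -> In z S.

Lemma nbrs_in_incl G x S S' : incl S S' -> nbrs_in G x S -> nbrs_in G x S'.
Proof. intros HS H z Hz. exact (HS z (H z Hz)). Qed.

Lemma degree_ge3_of_vt G : vertex_transitive G -> contains_D5 G -> degree_ge3 G.
Proof.
  intros vt [v [a [b [c [d C]]]]] w l Hl.
  destruct (vt v w) as [f [Hf <-]].
  destruct (aut_copy G f v a b c d Hf C) as [N [Ha [Hb [Hc _]]]].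
  apply (NoDup_app_remove_r [f v; f a; f b; f c] [f d]) in N.
  destruct (exists_not_In _ (f v :: l) N) as [z [Hz Hzl]]; [simpl; lia|].
  exists z. split; [|exact Hzl].
  simpl in Hz, Hzl. destruct Hz as [<-|[<-|[<-|[<-|[]]]]]; tauto.
Qed.

Section NotExtendable.
Variable G : graph.
Hypothesis deg : degree_ge3 G.
Hypothesis conn : connected G.
Hypothesis six : more_than_five_vertices G.
Hypothesis not_ext : ~ D5_extendable G.

Lemma nbrs_in_center v a b c d : D5_copy G v a b c d -> nbrs_in G v [v; a; b; c; d].
Proof. intros C z Hz. apply NNPP. intro Hout. apply not_ext. exists v, a, b, c, d, z. auto. Qed.

Lemma nbrs_in_middle v a b c d : D5_copy G v a b c d -> nbrs_in G c [v; a; b; c; d].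
Proof. intros C z Hz. apply NNPP. intro Hout. apply not_ext. exists v, a, b, c, d, z. auto. Qed.

Lemma four_star_nbrs_in x p q r s : NoDup [x; p; q; r; s] ->
  adj G x p -> adj G x q -> adj G x r -> adj G x s -> nbrs_in G s [x; p; q; r; s].
Proof.
  intros N Hp Hq Hr Hs z Hz. apply NNPP. intro Hout.
  assert (C : D5_copy G x p q s z) by (nodup_facts; prove_copy).
  pose proof (nbrs_in_center _ _ _ _ _ C r Hr). nodup_facts. intuition congruence.
Qed.

Lemma adj_sibling_of_not_adj x p q r : NoDup [x; p; q; r] ->
  adj G x p -> adj G x q -> adj G x r -> ~ adj G r q -> adj G r p.
Proof.
  intros N Hp Hq Hr Hrq. apply NNPP. intro Hrp.
  destruct (deg r [x] ltac:(simpl; lia)) as [z [Hz Hzx]].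
  destruct (deg r [x; z] ltac:(simpl; lia)) as [z' [Hz' Hz'x]].
  assert (C : D5_copy G x p q r z).
  { nodup_facts. prove_copy. }
  pose proof (nbrs_in_middle _ _ _ _ _ C z' Hz'). nodup_facts. intuition (subst; auto).
Qed.

Lemma closed_five_False v a b c d :
  (forall x, In x [v; a; b; c; d] -> nbrs_in G x [v; a; b; c; d]) -> False.
Proof.
  intros Hcl. destruct six as [l [N Hl]].
  assert (all : forall z, In z [v; a; b; c; d]).
  { apply (connected_closed_all G _ v conn); [simpl; auto|].
    intros y z Hy Hyz. exact (Hcl y Hy z Hyz). }
  pose proof (NoDup_incl_length N (fun z _ => all z)). simpl in *. lia.
Qed.

Ltac close_five v a b c d Nv Na Nb Nc Nd :=
  apply (closed_five_False v a b c d); simpl;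
  intros x [<-|[<-|[<-|[<-|[<-|[]]]]]];
  [ revert Nv | revert Na | revert Nb | revert Nc | revert Nd ];
  apply nbrs_in_incl; intros y; simpl; tauto.

Lemma copy_with_chord_False v a b c d :
  D5_copy G v a b c d -> adj G c a -> ~ adj G v d -> False.
Proof.
  intros C Hca Hvd.
  pose proof (nbrs_in_center _ _ _ _ _ C) as Nv. pose proof (nbrs_in_middle _ _ _ _ _ C) as Nc.
  pose proof C as [N [Hva [Hvb [Hvc Hcd]]]].
  destruct (classic (adj G c b)) as [Hcb|Hcb].
  - assert (Na : nbrs_in G a [c; v; b; d; a])
      by (apply four_star_nbrs_in; auto using adj_sym; nodup_facts; prove_NoDup).
    assert (Nb : nbrs_in G b [c; v; a; d; b])
      by (apply four_star_nbrs_in; auto using adj_sym; nodup_facts; prove_NoDup).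
    assert (Nd : nbrs_in G d [c; v; a; b; d])
      by (apply four_star_nbrs_in; auto using adj_sym; nodup_facts; prove_NoDup).
    close_five v a b c d Nv Na Nb Nc Nd.
  - assert (Hba : adj G b a).
    { apply (adj_sibling_of_not_adj v a c b); auto using adj_sym. nodup_facts; prove_NoDup. }
    assert (Hda : adj G d a).
    { apply (adj_sibling_of_not_adj c a v d); auto using adj_sym. nodup_facts; prove_NoDup. }
    assert (Na : nbrs_in G a [a; v; b; c; d])
      by (apply (nbrs_in_center a v b c d); nodup_facts; prove_copy).
    assert (Nb : nbrs_in G b [a; v; c; d; b])
      by (apply four_star_nbrs_in; auto using adj_sym; nodup_facts; prove_NoDup).
    assert (Nd : nbrs_in G d [a; v; c; b; d])
      by (apply four_star_nbrs_in; auto using adj_sym; nodup_facts; prove_NoDup).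
    close_five v a b c d Nv Na Nb Nc Nd.
Qed.

Lemma path_to_nonneighbour_False v c d :
  adj G v c -> adj G c d -> ~ In d [v; c] -> ~ adj G v d -> False.
Proof.
  intros Hvc Hcd Hd Hvd.
  destruct (deg v [c] ltac:(simpl; lia)) as [a [Hva Ha]].
  destruct (deg v [c; a] ltac:(simpl; lia)) as [b [Hvb Hb]].
  assert (C : D5_copy G v a b c d).
  { simpl in *. prove_copy. }
  destruct (deg c [v; d] ltac:(simpl; lia)) as [e [Hce He]].
  pose proof (nbrs_in_middle _ _ _ _ _ C e Hce) as [E|[<-|[<-|[E|[E|[]]]]]];
    simpl in He; try tauto.
  - exact (copy_with_chord_False v a b c d C Hce Hvd).
  - apply (copy_with_chord_False v b a c d); [|exact Hce|exact Hvd].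
    nodup_facts. prove_copy.
Qed.

Lemma universal_vertex_False v : (forall z, z = v \/ adj G v z) -> False.
Proof.
  intros Hv. destruct six as [l [N Hl]].
  destruct (exists_not_In l [v] N ltac:(simpl; lia)) as [c [_ Hc]].
  destruct (deg c [v] ltac:(simpl; lia)) as [d [Hcd Hd]].
  destruct (exists_not_In l [v; c; d] N ltac:(simpl; lia)) as [a [_ Ha]].
  destruct (exists_not_In l [v; c; d; a] N ltac:(simpl; lia)) as [b [_ Hb]].
  destruct (exists_not_In l [v; c; d; a; b] N ltac:(simpl; lia)) as [z [_ Hz]].
  assert (Hadj : forall x, x <> v -> adj G v x) by (intros x Hx; destruct (Hv x); tauto).
  simpl in *.
  assert (C : D5_copy G v a b c d) by (split; [prove_NoDup|repeat split; auto]).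
  pose proof (nbrs_in_center _ _ _ _ _ C z (Hadj z (fun E => Hz (or_introl (eq_sym E))))).
  simpl in *. tauto.
Qed.

Lemma not_extendable_False : False.
Proof.
  destruct six as [[|v l] [_ Hl]]; [discriminate|].
  destruct (classic (exists c d, adj G v c /\ adj G c d /\ ~ In d [v; c] /\ ~ adj G v d))
    as [[c [d [Hvc [Hcd [Hd Hvd]]]]]|Hno].
  - exact (path_to_nonneighbour_False v c d Hvc Hcd Hd Hvd).
  - apply (universal_vertex_False v).
    apply (connected_closed_all G _ v conn); [left; reflexivity|].
    intros y z [->|Hvy] Hyz; [right; exact Hyz|].
    destruct (classic (z = v \/ adj G v z)) as [|Hz]; [assumption|].
    exfalso. apply Hno. exists y, z. simpl. intuition congruence.
Qed.
End NotExtendable.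

Lemma extendable_of_degree_ge3 G :
  degree_ge3 G -> connected G -> more_than_five_vertices G -> D5_extendable G.
Proof. intros deg conn six. apply NNPP. exact (not_extendable_False G deg conn six). Qed.

Definition hit_twice (G : graph) (X : list (V G)) : Prop := exists v a b c d w w',
  D5_copy G v a b c d /\ w <> w' /\ In w [v; a; b; c; d] /\ In w' [v; a; b; c; d] /\
  In w X /\ In w' X.

Lemma extendable_through G x : vertex_transitive G -> D5_extendable G -> exists v a b c d z,
  D5_copy G v a b c d /\ ~ In z [v; a; b; c; d] /\
  ((adj G v z /\ a = x) \/ (adj G c z /\ d = x)).
Proof.
  intros vt [v [a [b [c [d [z [C [Hz Hext]]]]]]]].
  assert (move : forall f, is_aut G f ->
    D5_copy G (f v) (f a) (f b) (f c) (f d) /\ ~ In (f z) (map f [v; a; b; c; d])).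
  { intros f Hf. split; [exact (aut_copy G f _ _ _ _ _ Hf C)|].
    intro H. exact (Hz (aut_In G f z _ Hf H)). }
  destruct Hext as [Hvz|Hcz].
  - destruct (vt a x) as [f [Hf Hfa]]. destruct (move f Hf) as [C' Hz'].
    exists (f v), (f a), (f b), (f c), (f d), (f z).
    split; [exact C'|]. split; [exact Hz'|]. left. split; [apply aut_adj|]; assumption.
  - destruct (vt d x) as [f [Hf Hfd]]. destruct (move f Hf) as [C' Hz'].
    exists (f v), (f a), (f b), (f c), (f d), (f z).
    split; [exact C'|]. split; [exact Hz'|]. right. split; [apply aut_adj|]; assumption.
Qed.

Section HitTwice.
Variable G : graph.
Variable X : list (V G).
Hypothesis hit : hits_D5 G X.

Lemma hit_twice_of_leaf_swap v a b c d z : D5_copy G v a b c d -> ~ In z [v; a; b; c; d] ->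
  adj G v z -> In a X -> hit_twice G X.
Proof.
  intros C Hz Hvz Ha.
  destruct (classic (exists w, In w [v; b; c; d] /\ In w X)) as [[w [Hw HwX]]|Hno].
  - exists v, a, b, c, d, a, w. split; [exact C|]. nodup_facts. intuition congruence.
  - assert (C2 : D5_copy G v z b c d) by (nodup_facts; prove_copy).
    destruct (hit _ _ _ _ _ C2) as [w [Hw HwX]].
    assert (w = z) as ->.
    { apply NNPP. intro Hwz. apply Hno. exists w. simpl in *. intuition congruence. }
    assert (C3 : D5_copy G v a z c d) by (nodup_facts; prove_copy).
    exists v, a, z, c, d, a, z. split; [exact C3|]. nodup_facts. intuition congruence.
Qed.

Lemma hit_twice_of_end_swap v a b c d z : D5_copy G v a b c d -> ~ In z [v; a; b; c; d] ->
  adj G c z -> In d X -> hit_twice G X.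
Proof.
  intros C Hz Hcz Hd.
  destruct (classic (exists w, In w [v; a; b; c] /\ In w X)) as [[w [Hw HwX]]|Hno].
  - exists v, a, b, c, d, d, w. split; [exact C|]. nodup_facts. intuition congruence.
  - assert (C2 : D5_copy G v a b c z) by (nodup_facts; prove_copy).
    destruct (hit _ _ _ _ _ C2) as [w [Hw HwX]].
    assert (w = z) as ->.
    { apply NNPP. intro Hwz. apply Hno. exists w. simpl in *. intuition congruence. }
    assert (C3 : D5_copy G c d z v a) by (nodup_facts; prove_copy).
    exists c, d, z, v, a, d, z. split; [exact C3|]. nodup_facts. intuition congruence.
Qed.
End HitTwice.

Lemma hit_twice_of_extendable G X : vertex_transitive G -> D5_extendable G ->
  hits_D5 G X -> X <> [] -> hit_twice G X.
Proof.
  intros vt ext hit HX. destruct X as [|x X']; [congruence|].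
  destruct (extendable_through G x vt ext) as [v [a [b [c [d [z [C [Hz [[Hvz <-]|[Hcz <-]]]]]]]]]].
  - apply (hit_twice_of_leaf_swap G _ hit v a b c d z); simpl; auto.
  - apply (hit_twice_of_end_swap G _ hit v a b c d z); simpl; auto.
Qed.

Definition locally_finite_at (G : graph) (w : V G) : Prop :=
  exists l, forall z, adj G w z -> In z l.

Lemma locally_finite_everywhere G w0 : vertex_transitive G -> locally_finite_at G w0 ->
  forall w, locally_finite_at G w.
Proof.
  intros vt [l Hl] w. destruct (vt w w0) as [f [Hf Hfw]].
  pose proof Hf as [[g [Hgf _]] _].
  exists (map g l). intros z Hz. rewrite <- (Hgf z). apply in_map, Hl.
  rewrite <- Hfw. exact (aut_adj G f _ _ Hf Hz).
Qed.

Lemma not_hits_of_nowhere_locally_finite G X (w0 : V G) :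
  (forall w, ~ locally_finite_at G w) -> ~ hits_D5 G X.
Proof.
  intros inf hit.
  assert (new : forall w l, exists z, adj G w z /\ ~ In z l).
  { intros w l. apply NNPP. intro H. apply (inf w). exists l. intros z Hz.
    apply NNPP. intro Hzl. apply H. eauto. }
  destruct (new w0 X) as [v [_ Hv]].
  destruct (new v (v :: X)) as [a [Ha Ha']].
  destruct (new v (a :: v :: X)) as [b [Hb Hb']].
  destruct (new v (b :: a :: v :: X)) as [c [Hc Hc']].
  destruct (new c (c :: b :: a :: v :: X)) as [d [Hd Hd']].
  assert (C : D5_copy G v a b c d) by (simpl in *; prove_copy).
  destruct (hit _ _ _ _ _ C) as [w [Hw HwX]].
  simpl in *. intuition congruence.
Qed.

Lemma finite_of_hits_D5 G X : vertex_transitive G -> contains_D5 G -> hits_D5 G X ->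
  exists l, forall v : V G, In v l.
Proof.
  intros vt cD5 hit. pose proof cD5 as [v0 [a0 [b0 [c0 [d0 C0]]]]].
  destruct (classic (exists w, locally_finite_at G w)) as [[w0 Hw0]|Hinf].
  2:{ exfalso. apply (not_hits_of_nowhere_locally_finite G X v0); [|exact hit].
      intros w Hw. apply Hinf. eauto. }
  pose proof (locally_finite_everywhere G w0 vt Hw0) as lf.
  apply choice in lf as [L HL].
  pose (ball l := l ++ flat_map L l).
  assert (ball_self : forall l y, In y l -> In y (ball l)) by (intros; apply in_or_app; auto).
  assert (ball_nbr : forall l y z, In y l -> adj G z y -> In z (ball l)).
  { intros l y z Hy Hzy. apply in_or_app. right. apply in_flat_map.
    exists y. split; [exact Hy|]. apply HL, adj_sym, Hzy. }
  exists (ball (ball X)). intros y.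
  destruct (vt v0 y) as [f [Hf <-]].
  destruct (aut_copy G f _ _ _ _ _ Hf C0) as [_ [Ha [Hb [Hc Hd]]]].
  destruct (hit _ _ _ _ _ (aut_copy G f _ _ _ _ _ Hf C0)) as [w [Hw HwX]].
  simpl in Hw. destruct Hw as [<-|[<-|[<-|[<-|[<-|[]]]]]].
  - exact (ball_self _ _ (ball_self _ _ HwX)).
  - exact (ball_self _ _ (ball_nbr X _ _ HwX Ha)).
  - exact (ball_self _ _ (ball_nbr X _ _ HwX Hb)).
  - exact (ball_self _ _ (ball_nbr X _ _ HwX Hc)).
  - apply (ball_nbr (ball X) (f c0)); [exact (ball_nbr X _ _ HwX Hd)|exact Hc].
Qed.

(* MathComp is imported only inside [Counting]: its [<] on [nat] would otherwise
   replace the Peano [<] of the final statement. *)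
From mathcomp Require ssreflect ssrfun ssrbool eqtype ssrnat seq fintype finfun finset bigop.

Module Counting.
Import ssreflect ssrfun ssrbool eqtype ssrnat seq fintype finfun finset bigop.

Section DoubleCounting.
Variables (T : finType) (k : nat) (P : pred {ffun 'I_k -> T}).

Definition fibre (j : 'I_k) (w : T) := [set t | P t & t j == w].

Lemma card_fibre_eq_of_transitive : (forall w w' : T, exists s : T -> T,
    [/\ injective s, s w = w' & forall t, P t -> P [ffun i => s (t i)]]) ->
  forall j w w', #|fibre j w| = #|fibre j w'|.
Proof.
move=> sym j.
suff le w w' : #|fibre j w| <= #|fibre j w'|.
  by move=> w w'; apply/eqP; rewrite eqn_leq !le.
have [s [inj_s sw Ps]] := sym w w'.
pose S (t : {ffun 'I_k -> T}) : {ffun 'I_k -> T} := [ffun i => s (t i)].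
have inj_S : injective S.
  move=> t1 t2 E; apply/ffunP => i; apply: inj_s.
  by have := congr1 (fun f : {ffun 'I_k -> T} => f i) E; rewrite /S !ffunE.
rewrite -(card_imset _ inj_S); apply: subset_leq_card.
apply/subsetP => _ /imsetP [t + ->]; rewrite inE => /andP [Pt /eqP tj].
by rewrite inE Ps //= ffunE tj sw.
Qed.

Lemma sum_card_fibre j : \sum_(w : T) #|fibre j w| = #|P|.
Proof.
rewrite -[RHS]sum1_card [RHS](partition_big (fun t : {ffun 'I_k -> T} => t j) predT) //=.
by apply: eq_bigr => w _; rewrite sum1dep_card.
Qed.

Lemma sum_mem_fibre (X : {pred T}) j :
  \sum_(t | P t) (t j \in X) = \sum_(w in X) #|fibre j w|.
Proof.
rewrite -big_mkcondr /= (partition_big (fun t : {ffun 'I_k -> T} => t j) (mem X)) /=.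
  2: by move=> t /andP [].
apply: eq_bigr => w Xw; rewrite -sum1dep_card; apply: eq_bigl => t.
by case: eqP => [->|_]; rewrite ?andbF // (Xw : w \in X) andbT.
Qed.

Lemma card_lt_regular_transversal (X : {pred T}) :
  (forall j w w', #|fibre j w| = #|fibre j w'|) ->
  (forall t, P t -> exists j, t j \in X) ->
  (exists2 t, P t & exists j1 j2, [/\ j1 != j2, t j1 \in X & t j2 \in X]) ->
  #|T| < k * #|X|.
Proof.
move=> reg hitP [t0 Pt0 [j1 [j2 [j12 X1 X2]]]].
pose hits (t : {ffun 'I_k -> T}) := \sum_(j < k) (t j \in X).
set w0 := t0 j1.
have card_fibre j : #|T| * #|fibre j w0| = #|P|.
  rewrite -(sum_card_fibre j) (eq_bigr (fun=> #|fibre j w0|)) => [|w _]; last exact: reg.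
  by rewrite sum_nat_const.
have sum_hits : #|T| * \sum_(t | P t) hits t = k * (#|X| * #|P|).
  transitivity (\sum_(j < k) #|X| * #|P|); last by rewrite sum_nat_const card_ord.
  rewrite exchange_big big_distrr /=; apply: eq_bigr => j _.
  rewrite sum_mem_fibre (eq_bigr (fun=> #|fibre j w0|)) => [|w _]; last exact: reg.
  by rewrite sum_nat_const mulnCA card_fibre.
have hits_ge : #|P| < \sum_(t | P t) hits t.
  rewrite -[#|P|]sum1_card (eq_bigl P) // (bigD1 t0) // [X in _ < X](bigD1 t0) //= -addSn.
  apply: leq_add.
    by rewrite /hits (bigD1 j1) // (bigD1 j2) 1?eq_sym //= X1 X2 addnA leq_addr.
  apply: leq_sum => t /andP [Pt _]; have [j Xj] := hitP t Pt.
  by rewrite /hits (bigD1 j) //= Xj.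
have T_pos : 0 < #|T| by apply/card_gt0P; exists w0.
rewrite ltnNge; apply/negP => le.
have := leq_mul le (leqnn #|P|); rewrite -mulnA -sum_hits.
by rewrite leq_pmul2l // leqNgt hits_ge.
Qed.
End DoubleCounting.

Definition asbool (P : Prop) : bool := if excluded_middle_informative P then true else false.

Lemma asboolP (P : Prop) : reflect P (asbool P).
Proof. by rewrite /asbool; case: excluded_middle_informative => H; constructor. Qed.

Lemma enum_list_bij {A : Type} (l : list A) (a0 : A) : NoDup l -> (forall x, In x l) ->
  exists enc : A -> 'I_(length l),
    cancel enc (fun i => List.nth i l a0) /\ cancel (fun i : 'I_(length l) => List.nth i l a0) enc.
Proof.
move=> ndl all.
have surj x : exists i : 'I_(length l), List.nth i l a0 = x.
  by have [n [/ltP lt_n <-]] := In_nth l x a0 (all x); exists (Ordinal lt_n).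
have [enc encK] := choice _ surj.
exists enc; split => // i; apply: val_inj.
apply: (proj1 (NoDup_nth l a0) ndl); [exact/ltP/ltn_ord | exact/ltP/ltn_ord | exact: encK].
Qed.

Lemma In_mem_map {A : Type} {B : eqType} (f : A -> B) x s : In x s -> f x \in map f s.
Proof. by elim: s => //= y s IH [->|/IH]; rewrite in_cons ?eqxx // => ->; rewrite orbT. Qed.

Lemma size_length {A : Type} (s : list A) : size s = length s.
Proof. by elim: s => //= x s ->. Qed.

Lemma length_lt_of_hit_twice G (l X : list (V G)) : NoDup l -> (forall v, In v l) ->
  vertex_transitive G -> hits_D5 G X -> hit_twice G X -> (length l < 5 * length X)%coq_nat.
Proof.
move=> ndl all vt hit [v0 [a0 [b0 [c0 [d0 [w1 [w2 [C0 [w12 [S1 [S2 [X1 X2]]]]]]]]]]]].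
have [enc [encK decK]] := enum_list_bij l v0 ndl all.
set dec := fun i => _ in encK decK.
pose at5 (t : {ffun 'I_5 -> 'I_(length l)}) k := dec (t (inord k)).
pose P t := asbool (D5_copy G (at5 t 0) (at5 t 1) (at5 t 2) (at5 t 3) (at5 t 4)).
have encX x : In x X -> enc x \in map enc X by exact: In_mem_map.
apply/ltP; rewrite -[length l]card_ord -[length X]size_length -(size_map enc X).
apply: (leq_trans _ (leq_mul (leqnn 5) (card_size _))).
apply: (@card_lt_regular_transversal _ 5 P).
- apply: card_fibre_eq_of_transitive => w w'.
  have [f [Hf fw]] := vt (dec w) (dec w').
  exists (fun i => enc (f (dec i))); split.
  + move=> i i' E; apply: (can_inj decK); apply: (aut_inj G f _ _ Hf).
    by rewrite -[f (dec i)]encK E encK.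
  + by rewrite fw decK.
  + move=> t /asboolP C; apply/asboolP; rewrite /at5 !ffunE !encK.
    exact: aut_copy.
- move=> t /asboolP /hit [w [Sw Xw]].
  have [j Ej] : exists j, dec (t j) = w by case: Sw => [<-|[<-|[<-|[<-|[<-|[]]]]]]; eexists.
  by exists j; rewrite -[t j]decK; apply: encX; rewrite Ej.
- pose t : {ffun 'I_5 -> 'I_(length l)} :=
    [ffun j : 'I_5 => enc (List.nth j [v0; a0; b0; c0; d0] v0)].
  have tE j : dec (t j) = List.nth j [v0; a0; b0; c0; d0] v0 by rewrite ffunE encK.
  have pos w : In w [v0; a0; b0; c0; d0] -> exists j, dec (t j) = w.
    by move=> /(In_nth _ _ v0) [n [/ltP lt_n <-]]; exists (Ordinal lt_n); rewrite tE.
  exists t; first by apply/asboolP; rewrite /at5 !tE !inordK.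
  have [[j1 E1] [j2 E2]] := (pos w1 S1, pos w2 S2).
  exists j1, j2; split.
  + by apply: contraPneq w12 => E; rewrite -E1 -E2 E.
  + by rewrite -[t j1]decK; apply: encX; rewrite E1.
  + by rewrite -[t j2]decK; apply: encX; rewrite E2.
Qed.
End Counting.

Lemma aut_invariant_hits_all G Y : vertex_transitive G -> contains_D5 G ->
  hits_D5 G Y -> aut_invariant G Y -> forall v, In v Y.
Proof.
  intros vt [v [a [b [c [d C]]]]] hit inv u.
  destruct (hit _ _ _ _ _ C) as [y [_ Hy]].
  destruct (vt y u) as [f [Hf <-]]. exact (inv f Hf y Hy).
Qed.

Lemma Upsilon_v_sym_D5_vertices G (l : list (V G)) : vertex_transitive G -> contains_D5 G ->
  NoDup l -> (forall v, In v l) -> Upsilon_v_sym_D5 G (length l).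
Proof.
  intros vt cD5 ndl all. split.
  - exists l. split; [exact ndl|]. split; [reflexivity|]. split.
    + intros v a b c d _. exists v. split; [left; reflexivity|apply all].
    + intros f _ x _. apply all.
  - intros m [Y [_ [<- [hit inv]]]]. apply (NoDup_incl_length ndl).
    intros u _. exact (aut_invariant_hits_all G Y vt cD5 hit inv u).
Qed.

Lemma Upsilon_v_sym_D5_lt G : vertex_transitive G -> connected G ->
  more_than_five_vertices G -> contains_D5 G ->
  forall n, Upsilon_v_D5 G n -> exists s, Upsilon_v_sym_D5 G s /\ s < 5 * n.
Proof.
  intros vt conn six cD5 n [[X [_ [<- hit]]] _].
  destruct (finite_of_hits_D5 G X vt cD5 hit) as [l0 all0].
  pose (l := nodup (fun x y => excluded_middle_informative (x = y)) l0).
  assert (ndl : NoDup l) by apply NoDup_nodup.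
  assert (all : forall v, In v l) by (intro v; apply nodup_In, all0).
  exists (length l). split; [exact (Upsilon_v_sym_D5_vertices G l vt cD5 ndl all)|].
  apply (Counting.length_lt_of_hit_twice G l X ndl all vt hit).
  apply (hit_twice_of_extendable G X vt); [|exact hit|].
  - exact (extendable_of_degree_ge3 G (degree_ge3_of_vt G vt cD5) conn six).
  - destruct cD5 as [v [a [b [c [d C]]]]]. destruct (hit _ _ _ _ _ C) as [w [_ Hw]].
    intros ->. exact Hw.
Qed.

Lemma more_than_five_vertices_of_NoDup G (l : list (V G)) :
  NoDup l -> 6 <= length l -> more_than_five_vertices G.
Proof.
  intros ndl len. exists (firstn 6 l). split.
  - apply (NoDup_app_remove_r _ (skipn 6 l)). rewrite firstn_skipn. exact ndl.
  - exact (firstn_length_le l len).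
Qed.

Lemma Upsilon_v_sym_D5_unique G s s' :
  Upsilon_v_sym_D5 G s -> Upsilon_v_sym_D5 G s' -> s = s'.
Proof. intros [Hs min] [Hs' min']. pose proof (min _ Hs'). pose proof (min' _ Hs). lia. Qed.

Lemma D5_not_vertex_costly : ~ D5_vertex_costly vt_connected.
Proof.
  intros costly. destruct (costly 6) as [G [[vt conn] [n [s [Hn [Hs [-> le6]]]]]]].
  destruct (classic (contains_D5 G)) as [cD5|no].
  - pose proof Hs as [[Y [ndY [lenY _]]] _].
    assert (six : more_than_five_vertices G)
      by (apply (more_than_five_vertices_of_NoDup G Y ndY); lia).
    destruct (Upsilon_v_sym_D5_lt G vt conn six cD5 n Hn) as [s' [Hs' lt]].
    pose proof (Upsilon_v_sym_D5_unique G _ _ Hs Hs'). lia.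
  - assert (n <= 0).
    { apply (proj2 Hn). exists []. split; [constructor|]. split; [reflexivity|].
      intros v a b c d C. exfalso. apply no. exists v, a, b, c, d. exact C. }
    lia.
Qed.

Theorem theorem2 :
  (forall G : graph,
     vertex_transitive G -> connected G -> more_than_five_vertices G ->
     contains_D5 G ->
     forall n : nat, Upsilon_v_D5 G n ->
     exists s : nat, Upsilon_v_sym_D5 G s /\ s < 5 * n)
  /\ ~ D5_vertex_costly vt_connected.
Proof. exact (conj Upsilon_v_sym_D5_lt D5_not_vertex_costly). Qed.
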